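(* Let $G$ and $H$ be finite simple graphs, let $S$ be a minimal dominating set of $H$, and let $D$ be a minimal dominating set of $G$ with $c(D)\neq\emptyset$. Then for every $u\in c(D)$, the set $(\{u\} \times S) \cup \big( (D-\{u\}) \times V(H)\big)$ is a dominating set of the Cartesian product $G \,\square\, H$. If, in addition, $c(D)=\{u\}$, then $(\{u\} \times S) \cup \big( (D-\{u\}) \times V(H)\big)$ is a minimal dominating set of $G \,\square\, H$.
   Context: For $u\in A\subseteq V(G)$, the private neighborhood of $u$ with respect to $A$ is $\mathrm{pn}[u,A]=\{x\in V(G): N[x]\cap A=\{u\}\}$. For a dominating set $D$ of $G$, $c(D)=\{x\in D : \mathrm{pn}[x,D]=\{x\}\}$. The Cartesian product $G\,\square\, H$ has vertex set $V(G)\times V(H)$, with $(g_1,h_1)$ adjacent to $(g_2,h_2)$ iff either ($g_1=g_2$ and $h_1h_2\in E(H)$) or ($h_1=h_2$ and $g_1g_2\in E(G)$). *)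

From mathcomp Require Import all_boot.
Set Implicit Arguments. Unset Strict Implicit. Unset Printing Implicit Defensive.

Definition simple_graph (T : finType) (e : rel T) : Prop :=
  symmetric e /\ irreflexive e.

Definition cnbhd (T : finType) (e : rel T) (x : T) : {set T} :=
  x |: [set y | e x y].

Definition dominating (T : finType) (e : rel T) (D : {set T}) : Prop :=
  forall x : T, exists2 y, y \in D & y \in cnbhd e x.

Definition minimal_dominating (T : finType) (e : rel T) (D : {set T}) : Prop :=
  dominating e D /\ forall D' : {set T}, D' \proper D -> ~ dominating e D'.

Definition pn (T : finType) (e : rel T) (u : T) (A : {set T}) : {set T} :=
  [set x | cnbhd e x :&: A == [set u]].

Definition cset (T : finType) (e : rel T) (D : {set T}) : {set T} :=
  [set x in D | pn e x D == [set x]].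

Definition cartprod (T U : finType) (eG : rel T) (eH : rel U) : rel (T * U) :=
  fun p q => ((p.1 == q.1) && eH p.2 q.2) || ((p.2 == q.2) && eG p.1 q.1).

Definition prod_set (T U : finType) (u : T) (S : {set U}) (D : {set T}) : {set T * U} :=
  setX [set u] S :|: setX (D :\ u) [set: U].

From mathcomp Require Import all_boot.
Set Implicit Arguments. Unset Strict Implicit. Unset Printing Implicit Defensive.

(* A dominating set is minimal iff each of its vertices has a private
   neighbour.  As pn[u,D] = {u}, every vertex g <> u of G is dominated by
   D - {u}, so {u} x S only has to dominate the fibre {u} x V(H).  When
   c(D) = {u}: a private neighbour h of s in S yields the private neighbour
   (u,h) of (u,s); for a in D - {u}, a \notin c(D) provides a private
   neighbour y <> a of a, necessarily outside D, and (y,b) is then a private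
   neighbour of (a,b). *)

Section PrivateNeighbours.

Variables (T : finType) (e : rel T).

Lemma cnbhd_refl x : x \in cnbhd e x.
Proof. exact: setU11. Qed.

Lemma pnP u (A : {set T}) x :
  reflect [/\ u \in A, u \in cnbhd e x & {in A, forall z, z \in cnbhd e x -> z = u}]
          (x \in pn e u A).
Proof.
rewrite [_ \in pn _ _ _]inE; apply: (iffP eqP) => [/setP NxA | [uA uNx uniq]].
- have := NxA u; rewrite in_setI set11 => /andP[uNx uA].
  split=> // z zA zNx; apply/set1P.
  by rewrite -NxA in_setI zNx.
- apply/setP => z; rewrite in_setI in_set1.
  by apply/andP/eqP => [[zNx zA] | ->]; [exact: uniq | split].
Qed.

Lemma pn_neq_notin a (D : {set T}) y : y \in pn e a D -> y != a -> y \notin D.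
Proof.
case/pnP=> _ _ uniq ya; apply/negP => yD.
by rewrite (uniq y yD (cnbhd_refl y)) eqxx in ya.
Qed.

Lemma dominating_notin_pn u (D : {set T}) x :
  dominating e D -> x \notin pn e u D -> exists2 d, d \in D :\ u & d \in cnbhd e x.
Proof.
move=> domD xpn; have [y yD yNx] := domD x.
have /subsetPn[d] : ~~ (cnbhd e x :&: D \subset [set u]).
  rewrite subset1 negb_or; apply/andP; split; first by rewrite inE in xpn.
  by apply/set0Pn; exists y; rewrite in_setI yNx.
rewrite in_setI in_set1 => /andP[dNx dD] du.
by exists d; rewrite // in_setD1 du.
Qed.

Lemma minimal_dominatingP (D : {set T}) :
  minimal_dominating e D <->
  dominating e D /\ {in D, forall a, exists x, x \in pn e a D}.
Proof.
split=> [[domD minD] | [domD pnD]].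
- split=> // a aD; have [pn0 | /set0Pn //] := eqVneq (pn e a D) set0.
  case: (minD _ (properD1 aD)) => x.
  by apply: dominating_notin_pn domD _; rewrite pn0 in_set0.
- split=> // D' /properP[sD'D [a aD aD']] domD'.
  have [x /pnP[_ _ uniq]] := pnD a aD.
  have [y yD' yNx] := domD' x.
  have ya : y = a := uniq y (subsetP sD'D y yD') yNx.
  by rewrite -ya yD' in aD'.
Qed.

Lemma notin_cset_pn (D : {set T}) a :
  minimal_dominating e D -> a \in D -> a \notin cset e D ->
  exists2 y, y \in pn e a D & y != a.
Proof.
move=> /minimal_dominatingP[_ pnD] aD; rewrite inE aD /= => pna.
have [x xpn] := pnD a aD.
have /subsetPn[y ypn] : ~~ (pn e a D \subset [set a]).
  by rewrite subset1 negb_or pna; apply/set0Pn; exists x.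
by rewrite in_set1 => ya; exists y.
Qed.

End PrivateNeighbours.

Section CartesianProduct.

Variables (TG TH : finType) (eG : rel TG) (eH : rel TH).

Lemma cnbhd_cartprod (p q : TG * TH) :
  (q \in cnbhd (cartprod eG eH) p) =
  ((q.1 == p.1) && (q.2 \in cnbhd eH p.2)) ||
  ((q.2 == p.2) && (q.1 \in cnbhd eG p.1)).
Proof.
case: p q => [g h] [g' h']; rewrite !inE /cartprod /= xpair_eqE.
rewrite (eq_sym g) (eq_sym h).
by case: (g' == g); case: (h' == h); case: (eH h h'); case: (eG g g').
Qed.

Lemma prod_setE u (S : {set TH}) (D : {set TG}) (p : TG * TH) :
  (p \in prod_set u S D) =
  ((p.1 == u) && (p.2 \in S)) || ((p.1 != u) && (p.1 \in D)).
Proof. by case: p => g h; rewrite !inE /= andbT. Qed.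

Lemma prod_set_fst u (S : {set TH}) (D : {set TG}) (p : TG * TH) :
  u \in D -> p \in prod_set u S D -> p.1 \in D.
Proof. by move=> uD; rewrite prod_setE => /orP[/andP[/eqP -> _] | /andP[]]. Qed.

Lemma prod_set_dominating u (S : {set TH}) (D : {set TG}) :
  dominating eH S -> dominating eG D -> u \in cset eG D ->
  dominating (cartprod eG eH) (prod_set u S D).
Proof.
move=> domS domD /setIdP[_ /eqP pnu] [g h].
have [-> | gu] := eqVneq g u.
- have [s sS sNh] := domS h.
  by exists (u, s); rewrite ?prod_setE ?cnbhd_cartprod /= eqxx ?sS ?sNh.
- have gpn : g \notin pn eG u D by rewrite pnu in_set1.
  have [d dDu dNg] := dominating_notin_pn domD gpn.
  exists (d, h); first by rewrite prod_setE -in_setD1 dDu orbT.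
  by rewrite cnbhd_cartprod /= eqxx dNg orbT.
Qed.

Section Minimality.

Variables (S : {set TH}) (D : {set TG}) (u : TG).
Hypotheses (minS : minimal_dominating eH S) (minD : minimal_dominating eG D).
Hypothesis cD : cset eG D = [set u].

Let u_cset : u \in cset eG D. Proof. by rewrite cD set11. Qed.

Let uD : u \in D. Proof. by case/setIdP: u_cset. Qed.

Lemma pn_prod_set_fibre s :
  s \in S -> exists x, x \in pn (cartprod eG eH) (u, s) (prod_set u S D).
Proof.
move=> sS; have /minimal_dominatingP[_ pnS] := minS.
have [h /pnP[_ sNh sonly]] := pnS s sS.
have /pnP[_ _ uonly] : u \in pn eG u D.
  by case/setIdP: u_cset => _ /eqP ->; rewrite set11.
exists (u, h); apply/pnP; split.
- by rewrite prod_setE /= eqxx sS.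
- by rewrite cnbhd_cartprod /= eqxx sNh.
- move=> [g h'] qP; have gD := prod_set_fst uD qP.
  rewrite cnbhd_cartprod /= => /orP[/andP[/eqP gu h'Nh] | /andP[/eqP h'h gNu]].
  + move: qP; rewrite gu prod_setE /= eqxx /= orbF => h'S.
    by rewrite (sonly h' h'S h'Nh).
  + move: qP; rewrite h'h (uonly g gD gNu) prod_setE /= eqxx /= orbF => hS.
    by rewrite (sonly h hS (cnbhd_refl _ h)).
Qed.

Lemma pn_prod_set_layer a b :
  a \in D :\ u -> exists x, x \in pn (cartprod eG eH) (a, b) (prod_set u S D).
Proof.
case/setD1P=> au aD; have anc : a \notin cset eG D by rewrite cD in_set1.
have [y ypn ya] := notin_cset_pn minD aD anc.
have yD := pn_neq_notin ypn ya.
case/pnP: ypn => _ aNy aonly.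
exists (y, b); apply/pnP; split.
- by rewrite prod_setE /= (negbTE au) aD orbT.
- by rewrite cnbhd_cartprod /= eqxx aNy orbT.
- move=> [g h'] qP; have /= gD := prod_set_fst uD qP.
  rewrite cnbhd_cartprod /= => /orP[/andP[/eqP gy _] | /andP[/eqP -> gNy]].
  + by move: yD; rewrite -gy gD.
  + by rewrite (aonly g gD gNy).
Qed.

Lemma prod_set_minimal : minimal_dominating (cartprod eG eH) (prod_set u S D).
Proof.
apply/minimal_dominatingP; split.
- exact: prod_set_dominating (proj1 minS) (proj1 minD) u_cset.
- move=> [a b] /setUP[] /setXP[]; last by move=> aDu _; exact: pn_prod_set_layer.
  by move=> /set1P -> bS; exact: pn_prod_set_fibre.
Qed.

End Minimality.

End CartesianProduct.

Theorem lemma17 (TG TH : finType) (eG : rel TG) (eH : rel TH)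
  (hG : simple_graph eG) (hH : simple_graph eH)
  (S : {set TH}) (D : {set TG})
  (hS : minimal_dominating eH S) (hD : minimal_dominating eG D)
  (hc : cset eG D != set0) :
  (forall u, u \in cset eG D -> dominating (cartprod eG eH) (prod_set u S D)) /\
  (forall u, cset eG D = [set u] ->
     minimal_dominating (cartprod eG eH) (prod_set u S D)).
Proof.
split=> [u | u cD]; first exact: prod_set_dominating (proj1 hS) (proj1 hD).
exact: prod_set_minimal.
Qed.
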